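(* Let $d\ge 1$ and $2\le n_1\le n_2\le\cdots\le n_d$ be integers, and let $G=P_{n_1}\times P_{n_2}\times\cdots\times P_{n_d}$. Then $$\sigma_T(G)\le 2\left(\left\lfloor\tfrac{n_1}{2}\right\rfloor+\left\lfloor\tfrac{n_2}{2}\right\rfloor+\cdots+\left\lfloor\tfrac{n_{d-1}}{2}\right\rfloor\right)+1.$$
   Context: $P_n$ is the path on $n$ vertices and $\times$ is the Cartesian product, so $G$ is the $d$-dimensional grid with vertex set $\{(x_1,\dots,x_d): x_i\in\{1,\dots,n_i\}\}$, two vertices adjacent iff they differ by $1$ in exactly one coordinate and agree in all others. For a spanning tree $T$ of a connected graph $G$, $d_T(u,v)$ is the distance between $u$ and $v$ in $T$, $\sigma_T(G,T):=\max_{uv\in E(G)} d_T(u,v)$, and $\sigma_T(G):=\min\{\sigma_T(G,T): T \text{ a spanning tree of } G\}$. An empty sum is $0$. *)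

From mathcomp Require Import all_boot.
From Stdlib Require Import Classical ClassicalEpsilon.
Set Implicit Arguments. Unset Strict Implicit. Unset Printing Implicit Defensive.

(* Vertices of the grid P_{n_0} x ... x P_{n_{d-1}} (0-indexed coordinates,
   coordinate i ranges over {0,...,n i - 1}, a shift of {1,...,n_i}). *)
Definition gridV (d : nat) (n : nat -> nat) : finType :=
  {dffun forall i : 'I_d, 'I_(n i)}.

Definition grid_adj d n (x y : gridV d n) : bool :=
  [exists i : 'I_d,
     ((val (x i) == (val (y i)).+1) || (val (y i) == (val (x i)).+1)) &&
     [forall j : 'I_d, (j != i) ==> (val (x j) == val (y j))]].

Definition pbool (P : Prop) : bool :=
  if excluded_middle_informative P then true else false.

Section Trees.
Variable V : finType.

(* A subgraph given by an edge set of ordered pairs (required symmetric). *)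
Definition erel (E : {set V * V}) : rel V := fun u v => (u, v) \in E.

Definition has_cycle (e : rel V) : Prop :=
  exists c : seq V, [/\ 3 <= size c, uniq c & cycle e c].

Definition spanning_tree (adj : rel V) (E : {set V * V}) : Prop :=
  [/\ (forall u v, erel E u v = erel E v u),
      (forall u v, erel E u v -> adj u v),
      (forall u v, connect (erel E) u v) &
      ~ has_cycle (erel E)].

Definition walk_len (e : rel V) (u v : V) (k : nat) : bool :=
  [exists p : k.-tuple V, path e u p && (last u p == v)].

(* Graph distance: least k with a walk of length k (#|V| if unreachable,
   which never happens for a connected subgraph). *)
Definition gdist (e : rel V) (u v : V) : nat :=
  find (walk_len e u v) (iota 0 #|V|).

Definition stretch (adj : rel V) (E : {set V * V}) : nat :=
  \max_(p : V * V | adj p.1 p.2) gdist (erel E) p.1 p.2.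

(* sigma_T(G) = min over spanning trees T of sigma_T(G, T)
   (default #|V| is irrelevant: connected graphs have spanning trees). *)
Definition tree_stretch (adj : rel V) : nat :=
  \big[minn/#|V|]_(E : {set V * V} | pbool (spanning_tree adj E)) stretch adj E.
End Trees.

From mathcomp Require Import all_boot zify.
From Stdlib Require Import ClassicalEpsilon.
Set Implicit Arguments. Unset Strict Implicit. Unset Printing Implicit Defensive.

(* Root a spanning tree of the grid at the vertex r that is central
   (coordinate floor((n_i - 1)/2)) in the first d-1 coordinates and 0 in the
   last one. The parent of a vertex moves one off-centre coordinate among the
   first d-1 one step towards the centre, or, if there is none, decreases the
   last coordinate; the L1 distance to r strictly decreases, so the parent
   pointers form a spanning tree. The vertices that are central in the first
   d-1 coordinates form a path of the tree (the axis), every vertex x reaches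
   its projection on the axis in at most sum_{i<d-1} floor(n_i/2) tree steps,
   and the projections of two grid neighbours are equal or tree-adjacent. *)

Section Walks.
Variable V : finType.
Implicit Types (e : rel V) (u v w : V).

Lemma walk_lenP e u v k :
  reflect (exists s : seq V, [/\ size s = k, path e u s & last u s = v])
          (walk_len e u v k).
Proof.
apply: (iffP existsP) => [[s /andP[s_path /eqP s_last]]|[s [s_size s_path s_last]]].
  by exists (val s); rewrite size_tuple.
have s_size' : size s == k by rewrite s_size.
by exists (Tuple s_size'); rewrite /= s_path s_last eqxx.
Qed.

Lemma walk_len0 e u : walk_len e u u 0.
Proof. by apply/walk_lenP; exists [::]. Qed.

Lemma walk_len1 e u v : e u v -> walk_len e u v 1.
Proof. by move=> huv; apply/walk_lenP; exists [:: v]; rewrite /= huv. Qed.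

Lemma walk_len_cat e u v w k l :
  walk_len e u v k -> walk_len e v w l -> walk_len e u w (k + l).
Proof.
move=> /walk_lenP[s [<- s_path s_last]] /walk_lenP[t [<- t_path t_last]].
apply/walk_lenP; exists (s ++ t).
by rewrite size_cat cat_path last_cat s_path s_last t_path t_last.
Qed.

Lemma gdist_le_walk e u v k : walk_len e u v k -> gdist e u v <= k.
Proof.
move=> huv; rewrite /gdist; have [k_lt|k_ge] := ltnP k #|V|.
  rewrite leqNgt; apply/negP => /(before_find 0).
  by rewrite nth_iota // add0n huv.
by rewrite (leq_trans (find_size _ _)) ?size_iota.
Qed.
End Walks.

Lemma bigmin_le (T : eqType) (s : seq T) (P : pred T) (F : T -> nat) x0 y :
  y \in s -> P y -> \big[minn/x0]_(i <- s | P i) F i <= F y.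
Proof.
elim: s => //= a s IH; rewrite in_cons big_cons => /orP[/eqP <- -> | y_in Py].
  exact: geq_minl.
case: (P a); last exact: IH.
exact: leq_trans (geq_minr _ _) (IH y_in Py).
Qed.

Lemma tree_stretch_le (V : finType) (adj : rel V) (E : {set V * V}) k :
  spanning_tree adj E -> (forall u v, adj u v -> gdist (erel E) u v <= k) ->
  tree_stretch adj <= k.
Proof.
move=> E_tree E_le; have E_ok : pbool (spanning_tree adj E).
  by rewrite /pbool; case: excluded_middle_informative.
rewrite /tree_stretch; apply: leq_trans (bigmin_le _ _ (mem_index_enum E) E_ok) _.
by apply/bigmax_leqP => -[u v] /= /E_le.
Qed.

Section ParentTree.
Variables (V : finType) (adj : rel V) (p : V -> V) (h : V -> nat).
Hypothesis adj_sym : symmetric adj.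
Hypothesis adj_parent : forall x, p x != x -> adj x (p x).
Hypothesis height_parent : forall x, p x != x -> h (p x) < h x.
Hypothesis parent_root : forall x y, p x = x -> p y = y -> x = y.

Definition parent_edges : {set V * V} :=
  [set e | (e.1 != e.2) && ((e.2 == p e.1) || (e.1 == p e.2))].

Lemma parent_edgesE u v :
  erel parent_edges u v = (u != v) && ((v == p u) || (u == p v)).
Proof. by rewrite /erel inE. Qed.

Lemma parent_edges_sym u v : erel parent_edges u v = erel parent_edges v u.
Proof. by rewrite !parent_edgesE eq_sym orbC. Qed.

Lemma parent_edge x : p x != x -> erel parent_edges x (p x).
Proof. by move=> hx; rewrite parent_edgesE eq_sym hx eqxx. Qed.

Lemma parent_edges_adj u v : erel parent_edges u v -> adj u v.
Proof.
rewrite parent_edgesE => /andP[huv /orP[] /eqP e]; subst.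
  by apply: adj_parent; rewrite eq_sym.
by rewrite adj_sym; apply: adj_parent.
Qed.

Lemma connect_parent_root x : exists2 r, p r = r & connect (erel parent_edges) x r.
Proof.
have [k] := ubnP (h x); elim: k x => // k IH x /ltnSE hx.
have [px_x|px_x] := eqVneq (p x) x; first by exists x; rewrite ?connect0.
have [r pr_r pxr] := IH (p x) (leq_trans (height_parent px_x) hx).
by exists r; rewrite // (connect_trans (connect1 (parent_edge px_x))).
Qed.

Lemma parent_edges_connected u v : connect (erel parent_edges) u v.
Proof.
have sym : connect_sym (erel parent_edges).
  by apply: sym_connect_sym => a b; rewrite parent_edges_sym.
have [r pr_r ur] := connect_parent_root u; have [r' pr_r' vr'] := connect_parent_root v.
by rewrite (connect_trans ur) // sym (parent_root pr_r pr_r').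
Qed.

Lemma edge_from_highest v a :
  erel parent_edges v a -> h a <= h v -> a = p v.
Proof.
rewrite parent_edgesE => /andP[va /orP[/eqP // | /eqP v_pa]].
have pa_a : p a != a by rewrite -v_pa.
by move: (height_parent pa_a); rewrite -v_pa ltnNge => /negbTE->.
Qed.

Lemma parent_edges_acyclic : ~ has_cycle (erel parent_edges).
Proof.
case=> -[|x0 c0] [] //= c_size c_uniq c_cycle.
have [v v_in v_max] := @arg_maxnP _ x0 (mem (x0 :: c0)) h (mem_head _ _).
have [i c c_rot] := rot_to v_in.
have in_c y : y \in v :: c -> h y <= h v by rewrite -c_rot mem_rot => /v_max.
have size_c : 2 < size (v :: c) by rewrite -c_rot size_rot.
have uniq_c : uniq (v :: c) by rewrite -c_rot rot_uniq.
have cycle_c : cycle (erel parent_edges) (v :: c) by rewrite -c_rot rot_cycle.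
case: c {c_rot} in_c size_c uniq_c cycle_c => [|a [|b0 c]] // in_c _ /and3P[_ a_notin _].
rewrite /= rcons_path => /and4P[va _ _ bv]; set b := last b0 c in bv.
have b_in : b \in b0 :: c by exact: mem_last.
have a_pv : a = p v by apply: edge_from_highest va (in_c _ _); rewrite !inE eqxx orbT.
have b_pv : b = p v.
  apply: edge_from_highest; first by rewrite parent_edges_sym.
  by apply: in_c; rewrite (in_cons v) (in_cons a) b_in !orbT.
by move: a_notin; rewrite a_pv -b_pv b_in.
Qed.

Lemma parent_spanning_tree : spanning_tree adj parent_edges.
Proof.
split; [exact: parent_edges_sym | exact: parent_edges_adj |
        exact: parent_edges_connected | exact: parent_edges_acyclic].
Qed.
End ParentTree.

Definition dist_nat (a b : nat) := (a - b) + (b - a).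

Definition toward (a t : nat) := if a < t then a.+1 else if t < a then a.-1 else a.

Lemma toward_lt a t k : a < k -> t < k -> toward a t < k.
Proof. by rewrite /toward; case: (ltngtP a t); lia. Qed.

Lemma toward_id a t : (toward a t == a) = (a == t).
Proof. by rewrite /toward; case: (ltngtP a t) => [||->]; rewrite ?eqxx //; lia. Qed.

Lemma dist_toward a t : a != t -> (dist_nat (toward a t) t).+1 = dist_nat a t.
Proof. by rewrite /dist_nat /toward; case: (ltngtP a t); lia. Qed.

Lemma toward_adjacent a t :
  a != t -> (a == (toward a t).+1) || (toward a t == a.+1).
Proof. by rewrite /toward; case: (ltngtP a t); lia. Qed.

Lemma grid_adj_sym d n : symmetric (@grid_adj d n).
Proof.
apply: symmetric_from_pre => x y /existsP[i /andP[xy_i /forallP xy_eq]].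
apply/existsP; exists i; rewrite orbC xy_i; apply/forallP => j.
by apply/implyP => /(implyP (xy_eq j)); rewrite eq_sym.
Qed.

Section GridTree.
Variables (d : nat) (n : nat -> nat).
Hypothesis n_gt0 : forall j : 'I_d.+1, 0 < n j.
Local Notation V := (gridV d.+1 n).
Implicit Types (x y u v : V) (j k : 'I_d.+1).

Definition grid_of x (g : 'I_d.+1 -> nat) : V :=
  @finfun _ (fun j => 'I_(n j)) (fun j => insubd (x j) (g j)).

Lemma grid_ofE x g j : g j < n j -> grid_of x g j = g j :> nat.
Proof. by move=> g_lt; rewrite ffunE val_insubd g_lt. Qed.

Lemma grid_eq x y : (forall j, x j = y j :> nat) -> x = y.
Proof. by move=> xy; apply/ffunP => j; apply/val_inj/xy. Qed.

Definition target (j : nat) := if j == d then 0 else (n j).-1 %/ 2.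

Lemma target_lt j : target j < n j.
Proof. by have := n_gt0 j; rewrite /target; case: eqP; lia. Qed.

Definition step x j : V :=
  grid_of x (fun k => if k == j then toward (x k) (target k) else x k).

Lemma stepE x j k :
  step x j k = (if k == j then toward (x k) (target k) else x k) :> nat.
Proof. by rewrite grid_ofE //; case: eqP; rewrite ?toward_lt ?target_lt. Qed.

Lemma step_id x j : (step x j == x) = (x j == target j :> nat).
Proof.
apply/eqP/eqP => [/(congr1 (fun y : V => nat_of_ord (y j)))|x_j].
  by rewrite stepE eqxx => /eqP; rewrite toward_id => /eqP.
by apply: grid_eq => k; rewrite stepE; case: eqP => // ->; rewrite x_j /toward ltnn.
Qed.

Lemma step_adj x j : x j != target j :> nat -> grid_adj x (step x j).
Proof.
move=> x_j; apply/existsP; exists j; apply/andP; split.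
  by rewrite /= stepE eqxx; exact: toward_adjacent.
by apply/forallP => k; apply/implyP => /negbTE k_j; rewrite /= stepE k_j.
Qed.

Definition height x := \sum_j dist_nat (x j) (target j).

Lemma height_step x j : x j != target j :> nat -> (height (step x j)).+1 = height x.
Proof.
move=> x_j; rewrite /height (bigD1 j) //= [in RHS](bigD1 j) //= stepE eqxx.
rewrite -addSn dist_toward //; congr (_ + _); apply: eq_bigr => k /negbTE k_j.
by rewrite stepE k_j.
Qed.

Definition off_axis x j := (j != ord_max) && (x j != target j :> nat).

Definition next_coord x : 'I_d.+1 :=
  if [pick j | off_axis x j] is Some j then j else ord_max.

Definition parent x : V := step x (next_coord x).

Lemma parent_moved x :
  parent x != x -> x (next_coord x) != target (next_coord x) :> nat.
Proof. by rewrite /parent step_id. Qed.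

Lemma parent_adj x : parent x != x -> grid_adj x (parent x).
Proof. by move/parent_moved/step_adj. Qed.

Lemma height_parent x : parent x != x -> height (parent x) < height x.
Proof. by move/parent_moved/height_step <-. Qed.

Lemma parent_fixed x : parent x = x -> forall j, x j = target j :> nat.
Proof.
move/eqP; rewrite /parent step_id /next_coord.
case: pickP => [j /andP[_ /negbTE->] // | on_axis /eqP x_last] j.
have [->|j_last] := eqVneq j ord_max; first exact: x_last.
by apply/eqP; move: (on_axis j); rewrite /off_axis j_last => /negbFE.
Qed.

Lemma parent_root x y : parent x = x -> parent y = y -> x = y.
Proof.
by move=> /parent_fixed x_root /parent_fixed y_root; apply: grid_eq => j; rewrite x_root.
Qed.

Local Notation tree := (erel (parent_edges parent)).

Definition axis x : V :=
  grid_of x (fun k => if k == ord_max then nat_of_ord (x k) else target k).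

Lemma axisE x k : axis x k = (if k == ord_max then nat_of_ord (x k) else target k) :> nat.
Proof. by rewrite grid_ofE //; case: eqP; rewrite ?target_lt. Qed.

Definition spread x := \sum_(j | j != ord_max) dist_nat (x j) (target j).

Lemma height_split x : height x = spread x + x ord_max.
Proof.
rewrite /height (bigD1 ord_max) //= addnC /target /= eqxx /dist_nat.
by rewrite subn0 sub0n addn0.
Qed.

Lemma spread_step x j : j != ord_max -> x j != target j :> nat ->
  (spread (step x j)).+1 = spread x.
Proof.
move=> j_last x_j; have := height_step x_j; rewrite !height_split stepE.
by rewrite eq_sym (negbTE j_last); lia.
Qed.

Lemma axis_step x j : j != ord_max -> axis (step x j) = axis x.
Proof.
move=> j_last; apply: grid_eq => k; rewrite !axisE stepE.
by case: eqP => // ->; rewrite eq_sym (negbTE j_last).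
Qed.

Lemma spread_eq0 x : (spread x == 0) = [forall j, ~~ off_axis x j].
Proof.
rewrite sum_nat_eq0; apply: eq_forallb => j; rewrite /off_axis.
by case: (j != ord_max) => //=; rewrite negbK /dist_nat; apply/eqP/eqP; lia.
Qed.

Lemma axis_id x : spread x = 0 -> axis x = x.
Proof.
move/eqP; rewrite spread_eq0 => /forallP on_axis; apply: grid_eq => j.
rewrite axisE; case: eqP => // /eqP j_last.
by apply/esym/eqP; move: (on_axis j); rewrite /off_axis j_last negbK.
Qed.

Lemma walk_axis x :
  walk_len tree x (axis x) (spread x) && walk_len tree (axis x) x (spread x).
Proof.
move x_spread: (spread x) => k; elim: k x x_spread => [|k IH] x x_spread.
  by rewrite axis_id // walk_len0.
have [j j_off x_next] : exists2 j, off_axis x j & next_coord x = j.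
  rewrite /next_coord; case: pickP => [j j_off | on_axis]; first by exists j.
  have : spread x == 0 by rewrite spread_eq0; apply/forallP => j; rewrite on_axis.
  by rewrite x_spread.
case/andP: j_off => j_last x_j.
have px : parent x = step x j by rewrite /parent x_next.
have moved : parent x != x by rewrite px step_id.
have spread_px : spread (parent x) = k.
  by apply/succn_inj; rewrite px spread_step.
have /andP[to_axis from_axis] := IH _ spread_px.
rewrite px axis_step // -px in to_axis from_axis.
apply/andP; split.
  by rewrite -[k.+1]add1n; apply: walk_len_cat (walk_len1 (parent_edge moved)) to_axis.
rewrite -[k.+1]addn1; apply: walk_len_cat from_axis (walk_len1 _).
by rewrite parent_edges_sym parent_edge.
Qed.

Lemma parent_axis x y :
  x ord_max = (y ord_max).+1 :> nat -> parent (axis x) = axis y.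
Proof.
move=> xy_last; rewrite /parent.
have -> : next_coord (axis x) = ord_max.
  rewrite /next_coord; case: pickP => // j /andP[/negbTE j_last].
  by rewrite axisE j_last eqxx.
apply: grid_eq => k; rewrite stepE !axisE.
by case: eqP => [->|//]; rewrite xy_last /target /= eqxx.
Qed.

Lemma axis_edge x y : x ord_max = (y ord_max).+1 :> nat -> tree (axis x) (axis y).
Proof.
move=> xy_last; rewrite -(parent_axis xy_last); apply: parent_edge.
rewrite (parent_axis xy_last); apply/eqP => /(congr1 (fun z : V => nat_of_ord (z ord_max))).
by rewrite !axisE eqxx xy_last; lia.
Qed.

Lemma axis_link u v :
  grid_adj u v -> exists2 k, k <= 1 & walk_len tree (axis u) (axis v) k.
Proof.
case/existsP => i /andP[uv_i /forallP uv_eq].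
have [i_last|i_last] := eqVneq i ord_max.
  exists 1 => //; apply: walk_len1; rewrite i_last in uv_i.
  case/orP: uv_i => /eqP uv_last; first exact: axis_edge.
  by rewrite parent_edges_sym; exact: axis_edge.
exists 0 => //; have -> : axis u = axis v; last exact: walk_len0.
apply: grid_eq => k; rewrite !axisE; case: eqP => // ->.
by apply/eqP; apply: (implyP (uv_eq ord_max)); rewrite eq_sym.
Qed.

Lemma spread_le x : spread x <= \sum_(i < d) n i %/ 2.
Proof.
rewrite /spread big_mkcond big_ord_recr /= eqxx /= addn0; apply: leq_sum => i _.
have i_last : widen_ord (leqnSn d) i != ord_max.
  by rewrite -(inj_eq val_inj) /= neq_ltn ltn_ord.
rewrite i_last /target /= ifN ?neq_ltn ?ltn_ord //.
by have := ltn_ord (x (widen_ord (leqnSn d) i)); rewrite /dist_nat /=; lia.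
Qed.

Lemma tree_dist_grid_adj u v :
  grid_adj u v -> gdist tree u v <= 2 * (\sum_(i < d) n i %/ 2) + 1.
Proof.
move=> uv; have [k k_le axis_uv] := axis_link uv.
have /andP[u_axis _] := walk_axis u; have /andP[_ v_axis] := walk_axis v.
apply: leq_trans (gdist_le_walk (walk_len_cat (walk_len_cat u_axis axis_uv) v_axis)) _.
by have := spread_le u; have := spread_le v; lia.
Qed.
End GridTree.

Theorem lemma4p1 (d : nat) (n : nat -> nat)
  (hd : 1 <= d)
  (hn2 : forall i, i < d -> 2 <= n i)
  (hmono : forall i j, i <= j -> j < d -> n i <= n j) :
  tree_stretch (@grid_adj d n) <= 2 * (\sum_(i < d.-1) n i %/ 2) + 1.
Proof.
case: d hd hn2 {hmono} => // d _ hn2.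
have n_gt0 (j : 'I_d.+1) : 0 < n j by apply: leq_trans (hn2 j (ltn_ord j)).
apply: (tree_stretch_le (parent_spanning_tree (@grid_adj_sym _ _) (parent_adj n_gt0)
                          (height_parent n_gt0) (parent_root n_gt0))).
exact: tree_dist_grid_adj.
Qed.
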